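(* Let $\Gamma=M\mathbb{Z}^n$ be a lattice in $\mathbb{R}^n$ (or $\mathbb{C}^n$), where $M$ is an invertible real (or complex) $n\times n$ matrix, and let $A$ be a dilation matrix for $\Gamma$. Let $F_\Gamma=M([-\tfrac12,\tfrac12)^n)$ and $D=A(F_\Gamma)\cap\Gamma$. Then there exists a finite set $S\subset\Gamma$ such that every $x\in\Gamma$ satisfies exactly one of: (1) $x=\sum_{j=0}^{N}A^jd_j$ for some $N\ge0$ and $d_j\in D$; (2) $x=A^Ns+\sum_{j=0}^{N-1}A^jd_j$ for some $N\ge0$, $s\in S$, $d_j\in D$.
   Context: An integer dilation matrix is an $n\times n$ matrix with integer entries all of whose eigenvalues $\lambda$ satisfy $|\lambda|>1$. A matrix $A$ is a dilation matrix for $\Gamma=M\mathbb{Z}^n$ if $B=M^{-1}AM$ is an integer dilation matrix (so $A$ maps $\Gamma$ into itself with nontrivial cokernel). *)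

From HB Require Import structures.
From mathcomp Require Import all_boot all_order all_algebra all_field.
Set Implicit Arguments. Unset Strict Implicit. Unset Printing Implicit Defensive.
Import Order.TTheory GRing.Theory Num.Theory.
Local Open Scope ring_scope.

(* Integer dilation matrix: integer entries, every (complex) eigenvalue
   lambda satisfies |lambda| > 1.  Eigenvalues are taken in algC
   (the algebraic complex numbers), which contains all eigenvalues of
   an integer matrix. *)
Definition int_dilation (n : nat) (B : 'M[int]_n) : Prop :=
  forall lam : algC, eigenvalue (map_mx intr B) lam -> 1 < `|lam|.

Definition in_lattice (K : numFieldType) (n : nat) (M : 'M[K]_n)
  (x : 'cV[K]_n) : Prop :=
  exists z : 'cV[int]_n, x = M *m map_mx intr z.

Definition dilation_for (K : numFieldType) (n : nat) (M A : 'M[K]_n) : Prop :=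
  exists B : 'M[int]_n, int_dilation B /\ invmx M *m A *m M = map_mx intr B.

Definition in_fund_domain (K : numFieldType) (n : nat) (M : 'M[K]_n)
  (y : 'cV[K]_n) : Prop :=
  exists c : 'cV[K]_n,
    (forall i, - (2%:R)^-1 <= c i 0 /\ c i 0 < (2%:R)^-1) /\ y = M *m c.

Definition in_digits (K : numFieldType) (n : nat) (M A : 'M[K]_n)
  (d : 'cV[K]_n) : Prop :=
  in_lattice M d /\ exists y, in_fund_domain M y /\ d = A *m y.

Definition expansion1 (K : numFieldType) (n : nat) (M A : 'M[K]_n)
  (x : 'cV[K]_n) : Prop :=
  exists (N : nat) (d : 'I_N.+1 -> 'cV[K]_n),
    (forall j, in_digits M A (d j)) /\
    x = \sum_(j < N.+1) (A ^+ j *m d j).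

Definition expansion2 (K : numFieldType) (n : nat) (M A : 'M[K]_n)
  (S : seq 'cV[K]_n) (x : 'cV[K]_n) : Prop :=
  exists (N : nat) (s : 'cV[K]_n) (d : 'I_N -> 'cV[K]_n),
    s \in S /\ (forall j, in_digits M A (d j)) /\
    x = A ^+ N *m s + \sum_(j < N) (A ^+ j *m d j).

From HB Require Import structures.
From mathcomp Require Import all_boot all_order all_algebra all_field.
From mathcomp Require Import boolp zify ring lra.
Import Order.TTheory GRing.Theory Num.Theory.
Set Implicit Arguments. Unset Strict Implicit. Unset Printing Implicit Defensive.
Local Open Scope ring_scope.

(** Conjugating by M reduces everything to Z^n and the integer matrix
    B = M^-1 A M.  Rounding B^-1 z coordinatewise to the nearest integer
    (ties up) gives a map Phi with z = d + B (Phi z), where the digit d lies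
    in B([-1/2,1/2)^n) and is unique, so the digit expansions of z are read
    off its Phi-orbit: an expansion of type (1) of length N+1 exists iff
    Phi^(N+1) z = 0, and one of type (2) ending in s iff Phi^N z = s.
    All eigenvalues of B^-1 have modulus < 1, so after a Schur
    triangularisation B^-1 contracts a weighted l^1 norm; hence Phi is a
    contraction up to a bounded error, its orbits are finite and its
    periodic points lie in a bounded, hence finite, set.  Take S to be the
    nonzero periodic points: every orbit either reaches 0 or falls into a
    cycle through S, and never both. *)

Definition periodic (T : Type) (f : T -> T) (p : T) :=
  exists2 m, (0 < m)%N & iter m f p = p.

Section OrbitDichotomy.
Variables (T : eqType) (f : T -> T) (z0 : T).
Hypothesis f_z0 : f z0 = z0.
Hypothesis orbit_finite : forall z, exists s : seq T, forall k, iter k f z \in s.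
Hypothesis periodic_finite : exists P : seq T, forall p, periodic f p -> p \in P.

Lemma periodic_iter_fixed p N : periodic f p -> iter N f p = z0 -> p = z0.
Proof.
case=> m m_gt0 fm_p fN_p.
have fmN_p : iter (m * N) f p = p by rewrite mulnC iterM iter_fix.
by rewrite -fmN_p -(subnK (leq_pmull N m_gt0)) iterD fN_p iter_fix.
Qed.

Lemma eventually_periodic z : exists i, periodic f (iter i f z).
Proof.
have [s orbit_s] := orbit_finite z.
(* pigeonhole on the first (size s).+1 iterates *)
pose t := [seq iter k f z | k <- iota 0 (size s).+1].
have /(uniqPn z) [i [j [lt_ij lt_jt]]] : ~~ uniq t.
  apply: contraL (ltnSn (size s)) => /uniq_leq_size le_ts.
  rewrite -leqNgt -{1}(size_iota 0 (size s).+1) -(size_map (fun k => iter k f z)).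
  by apply: le_ts => _ /mapP [k _ ->].
rewrite size_map size_iota in lt_jt.
rewrite !(nth_map 0%N) ?size_iota ?(ltn_trans lt_ij) // !nth_iota ?(ltn_trans lt_ij) //.
rewrite !add0n => eq_ij; exists i, (j - i)%N; first by rewrite subn_gt0.
by rewrite -iterD subnK ?(ltnW lt_ij).
Qed.

Theorem orbit_dichotomy : exists S : seq T, forall z,
  ((exists N, iter N.+1 f z = z0) /\ ~ (exists N, iter N f z \in S)) \/
  (~ (exists N, iter N.+1 f z = z0) /\ (exists N, iter N f z \in S)).
Proof.
have [P periodic_P] := periodic_finite.
exists [seq p <- P | (p != z0) && `[< periodic f p >]] => z.
case: (pselect (exists N, iter N.+1 f z = z0)) => [[N fN_z] | not_reach]; [left | right].
  split; first by exists N.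
  case=> N'; rewrite mem_filter => /andP [/andP [/negP neq /asboolP per] _].
  apply/neq/eqP/(periodic_iter_fixed (N := N.+1) per).
  by rewrite -iterD addnC iterD fN_z iter_fix.
split=> //; have [i per] := eventually_periodic z; exists i.
rewrite mem_filter periodic_P // andbT; apply/andP; split; last exact/asboolP.
by apply: contra_notN not_reach => /eqP fi_z; exists i; rewrite iterS fi_z f_z0.
Qed.

End OrbitDichotomy.

Section AffineContraction.
Variables (R : numFieldType) (T : Type) (f : T -> T) (nu : T -> R) (a b : R).
Hypotheses (a_ge0 : 0 <= a) (a_lt1 : a < 1) (b_ge0 : 0 <= b).
Hypothesis nu_ge0 : forall z, 0 <= nu z.
Hypothesis nu_f : forall z, nu (f z) <= a * nu z + b.

Let L := b / (1 - a).

Let L_fixed : a * L + b = L.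
Proof. by rewrite /L; field; rewrite subr_eq0 gt_eqF. Qed.

Lemma affine_contraction_iter_le z k : nu (iter k f z) <= nu z + L.
Proof.
have L_ge0 : 0 <= L by rewrite divr_ge0 // subr_ge0 ltW.
elim: k => [|k IH] /=; first by rewrite lerDl.
apply: le_trans (nu_f _) _; apply: le_trans (_ : a * (nu z + L) + b <= _).
  by rewrite lerD2r ler_wpM2l.
by rewrite mulrDr -addrA L_fixed lerD2r ler_piMl // ltW.
Qed.

Lemma affine_contraction_periodic_le p : periodic f p -> nu p <= L.
Proof.
case=> m m_gt0 fm_p.
have nu_iter k : nu (iter k f p) - L <= a ^+ k * (nu p - L).
  elim: k => [|k IH]; first by rewrite expr0 mul1r.
  rewrite iterS exprS -mulrA; apply: le_trans (ler_wpM2l a_ge0 IH).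
  have -> : a * (nu (iter k f p) - L) = a * nu (iter k f p) + b - L.
    by rewrite -{2}L_fixed; ring.
  by rewrite lerD2r.
move: (nu_iter m); rewrite fm_p -subr_le0 -{1}[nu p - L]mul1r -mulrBl.
by rewrite pmulr_rle0 ?subr_le0 // subr_gt0 exprn_ilt1 // -lt0n.
Qed.

End AffineContraction.

Section RadixExpansion.
Variables (R : pzRingType) (n : nat) (B : 'M[R]_n) (is_digit : 'cV[R]_n -> Prop).
Variables (digit quot : 'cV[R]_n -> 'cV[R]_n).
Hypothesis digit_quot : forall z, digit z + B *m quot z = z.
Hypothesis is_digit_digit : forall z, is_digit (digit z).
Hypothesis quot_unique : forall e e' w w', is_digit e -> is_digit e' ->
  e + B *m w = e' + B *m w' -> w = w'.

Lemma radix_sum_recl N (d : 'I_N.+1 -> 'cV[R]_n) w :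
  \sum_(j < N.+1) B ^+ j *m d j + B ^+ N.+1 *m w =
  d ord0 + B *m (\sum_(j < N) B ^+ j *m d (lift ord0 j) + B ^+ N *m w).
Proof.
rewrite big_ord_recl expr0 mul1mx -addrA mulmxDr mulmx_sumr exprS -mulmxE -mulmxA.
by congr (_ + (_ + _)); apply: eq_bigr => j _; rewrite exprS -mulmxE mulmxA.
Qed.

Lemma radix_expansion N z :
  \sum_(j < N) B ^+ j *m digit (iter j quot z) + B ^+ N *m iter N quot z = z.
Proof.
elim: N => [|N IH]; first by rewrite big_ord0 add0r expr0 mul1mx.
rewrite big_ord_recr /= -addrA exprSr -mulmxE -mulmxA -mulmxDr digit_quot.
by rewrite -[in RHS]IH.
Qed.

Lemma radix_expansion_unique N z (d : 'I_N -> 'cV[R]_n) w : (forall j, is_digit (d j)) ->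
  \sum_(j < N) B ^+ j *m d j + B ^+ N *m w = z -> w = iter N quot z.
Proof.
elim: N z d => [|N IH] z d d_digit; first by rewrite big_ord0 add0r expr0 mul1mx.
rewrite radix_sum_recl iterSr => z_eq.
apply: IH (fun j => d_digit (lift ord0 j)) _.
by apply: (quot_unique (d_digit ord0) (is_digit_digit z)); rewrite z_eq digit_quot.
Qed.

End RadixExpansion.

Definition in_half_cube (F : numFieldType) (n : nat) (c : 'cV[F]_n) :=
  forall i, - (2%:R)^-1 <= c i 0 /\ c i 0 < (2%:R)^-1.

Lemma half_cube_sub_int (F : numFieldType) n (c c' : 'cV[F]_n) (w : 'cV[int]_n) :
  in_half_cube c -> in_half_cube c' -> c - c' = map_mx intr w -> w = 0.
Proof.
move=> cube_c cube_c' /matrixP cc'_w; apply/matrixP => i j; rewrite (ord1 j) !mxE.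
have [[lo_c hi_c] [lo_c' hi_c']] := (cube_c i, cube_c' i).
have := cc'_w i 0; rewrite !mxE => ci_w.
have half2 : (2%:R : F)^-1 + 2%:R^-1 = 1 by rewrite [RHS](splitr 1) mul1r.
have lt_w : (w i 0)%:~R < 1 :> F.
  by rewrite -ci_w -half2; apply: ltr_leD => //; rewrite lerNl.
have gt_w : (-1)%:~R < (w i 0)%:~R :> F.
  by rewrite -ci_w rmorphN1 -half2 opprD; apply: ler_ltD; rewrite // ltrN2.
by move: lt_w gt_w; rewrite ltrz1 ltr_int; lia.
Qed.

Lemma map_mx_intr_unit (F : numFieldType) n (B : 'M[int]_n) :
  \det B != 0 -> map_mx (intr : int -> F) B \in unitmx.
Proof. by rewrite unitmxE det_map_mx unitfE intr_eq0. Qed.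

Section HalfCubeDigits.
Variables (n : nat) (B : 'M[int]_n).
Hypothesis detB : \det B != 0.

(* The digit set D of the statement in the coordinates given by M (see
   [in_digitsP]); the cube lives in an arbitrary numField F, which is K for
   the lattice and algC for the norm estimates. *)
Definition half_cube_digit (F : numFieldType) (e : 'cV[int]_n) :=
  exists2 c : 'cV[F]_n, in_half_cube c & map_mx intr e = map_mx intr B *m c.

Lemma half_cube_digit_unique (F : numFieldType) e e' w w' :
  half_cube_digit F e -> half_cube_digit F e' -> e + B *m w = e' + B *m w' -> w = w'.
Proof.
case=> c cube_c e_c [c' cube_c' e'_c'] /(congr1 (map_mx (intr : int -> F))).
rewrite !map_mxD !map_mxM e_c e'_c' -!mulmxDr.
move/(can_inj (mulKmx (map_mx_intr_unit F detB))) => cw_eq.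
apply/eqP; rewrite eq_sym -subr_eq0; apply/eqP/(half_cube_sub_int cube_c cube_c').
by rewrite map_mxB -[c](addrK (map_mx intr w)) cw_eq addrAC [c' + _]addrC addrK.
Qed.

(* Nearest-integer rounding of B^-1 z, computed in rat where floor exists. *)
Definition round_quot (z : 'cV[int]_n) : 'cV[int]_n :=
  \col_i Num.floor ((invmx (map_mx intr B) *m map_mx (intr : int -> rat) z) i 0 + 2%:R^-1).

Definition round_digit (z : 'cV[int]_n) := z - B *m round_quot z.

Lemma round_digit_quot z : round_digit z + B *m round_quot z = z.
Proof. exact: subrK. Qed.

Lemma round_quot0 : round_quot 0 = 0.
Proof.
apply/matrixP => i j; rewrite /round_quot map_mx0 mulmx0 !mxE add0r.
by apply: floor_def; rewrite add0r invr_ge0 ler0n /= invf_lt1 ?ltr0n ?ltr1n.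
Qed.

Lemma round_error_half_cube (R : archiRealFieldType) (x : R) :
  - 2%:R^-1 <= x - (Num.floor (x + 2%:R^-1))%:~R < 2%:R^-1.
Proof.
have lo := floor_le (x + 2%:R^-1); have hi := floorD1_gt (x + 2%:R^-1).
by rewrite intrD in hi; apply/andP; split; lra.
Qed.

Lemma ratr_map_intr (F : numFieldType) m p (X : 'M[int]_(m, p)) :
  map_mx ratr (map_mx intr X) = map_mx (intr : int -> F) X.
Proof. by rewrite -map_mx_comp; apply: eq_map_mx => k /=; rewrite ratr_int. Qed.

Lemma half_cube_digit_round (F : numFieldType) z : half_cube_digit F (round_digit z).
Proof.
pose BQ := map_mx (intr : int -> rat) B.
have BQ_unit : BQ \in unitmx by exact: map_mx_intr_unit.
exists (map_mx ratr (invmx BQ *m map_mx intr (round_digit z))); last first.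
  by rewrite -(ratr_map_intr F B) -map_mxM mulKVmx // ratr_map_intr.
have -> : invmx BQ *m map_mx intr (round_digit z) =
    invmx BQ *m map_mx intr z - map_mx intr (round_quot z).
  by rewrite map_mxB map_mxM mulmxBr mulKmx.
move=> i; have := round_error_half_cube ((invmx BQ *m map_mx intr z) i 0).
have ratr_half : ratr (2%:R^-1) = (2%:R : F)^-1 by rewrite fmorphV rmorph_nat.
have ratr_Nhalf : ratr (- 2%:R^-1) = - (2%:R : F)^-1 by rewrite rmorphN fmorphV rmorph_nat.
by rewrite !mxE -/BQ -ratr_Nhalf -ratr_half ler_rat ltr_rat => /andP.
Qed.

End HalfCubeDigits.

Definition entry_abs_sum (R : numDomainType) m p (X : 'M[R]_(m, p)) :=
  \sum_i \sum_j `|X i j|.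

Lemma entry_abs_sum_ge0 (R : numDomainType) m p (X : 'M[R]_(m, p)) : 0 <= entry_abs_sum X.
Proof. by apply: sumr_ge0 => i _; apply: sumr_ge0 => j _. Qed.

Section WeightedNorm.
Variables (R : numFieldType) (n : nat) (eps : R).
Hypotheses (eps_ge0 : 0 <= eps) (eps_le1 : eps <= 1).

Definition wnorm (w : 'cV[R]_n) := \sum_(i < n) eps ^+ i * `|w i 0|.

Lemma wnorm_ge0 w : 0 <= wnorm w.
Proof. by apply: sumr_ge0 => i _; rewrite mulr_ge0 ?exprn_ge0. Qed.

Lemma wnormB u v : wnorm (u - v) <= wnorm u + wnorm v.
Proof.
rewrite -big_split; apply: ler_sum => i _ /=.
by rewrite !mxE -mulrDr ler_wpM2l ?exprn_ge0 // -(normrN (v i 0)) ler_normD.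
Qed.

Lemma wnorm_mul_half_cube (X : 'M[R]_n) (c : 'cV[R]_n) :
  in_half_cube c -> wnorm (X *m c) <= entry_abs_sum X.
Proof.
move=> cube_c; apply: ler_sum => i _; rewrite mxE.
apply: le_trans (ler_piMl (normr_ge0 _) (exprn_ile1 _ eps_ge0 eps_le1)) _.
apply: le_trans (ler_norm_sum _ _ _) _; apply: ler_sum => j _.
rewrite normrM ler_piMr //; have [lo hi] := cube_c j.
have half_le1 : (2%:R : R)^-1 <= 1 by rewrite invf_le1 ?ler1n ?ltr0n.
rewrite real_ler_norml; last by rewrite -(ler_real lo) rpredN rpredV realn.
by rewrite (le_trans _ lo) ?lerN2 // (le_trans (ltW hi)).
Qed.

(* For eps small the weights eps ^+ i make the strictly lower part of a
   triangular matrix negligible against its diagonal. *)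
Lemma weighted_column_le (T : 'M[R]_n) (q : R) j : is_trig_mx T -> (forall i, `|T i i| <= q) ->
  \sum_(i < n) eps ^+ i * `|T i j| <= eps ^+ j * (q + eps * entry_abs_sum T).
Proof.
move=> /is_trig_mxP T_trig T_diag.
have entry_le (i : 'I_n) : eps ^+ i * `|T i j| <=
    (if i == j then eps ^+ j * `|T j j| else 0) + eps ^+ j.+1 * `|T i j|.
  case: (ltngtP i j) => [lt_ij | lt_ji | /val_inj ->].
  - by rewrite T_trig // normr0 !mulr0 ifN ?addr0 // neq_ltn lt_ij.
  - by rewrite ifN ?add0r ?ler_wpM2r ?ler_wiXn2l // neq_ltn lt_ji orbT.
  - by rewrite eqxx lerDl mulr_ge0 ?exprn_ge0.
apply: le_trans (ler_sum _ (fun i _ => entry_le i)) _.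
rewrite big_split /= (bigD1 j) //= eqxx big1 ?addr0 => [|i /negbTE -> //].
rewrite -mulr_sumr mulrDr exprSr -mulrA lerD ?ler_wpM2l ?exprn_ge0 //.
by apply: ler_sum => i _; rewrite (bigD1 j) //= lerDl sumr_ge0.
Qed.

Lemma wnorm_trig_mul (T : 'M[R]_n) (q : R) w : is_trig_mx T -> (forall i, `|T i i| <= q) ->
  wnorm (T *m w) <= (q + eps * entry_abs_sum T) * wnorm w.
Proof.
move=> T_trig T_diag.
apply: (le_trans (y := \sum_(i < n) \sum_(j < n) eps ^+ i * `|T i j| * `|w j 0|)).
  apply: ler_sum => i _; rewrite mxE.
  under [X in _ <= X]eq_bigr => j _ do rewrite -mulrA.
  rewrite -mulr_sumr ler_wpM2l ?exprn_ge0 //.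
  by apply: le_trans (ler_norm_sum _ _ _) _; apply: ler_sum => j _; rewrite normrM.
rewrite exchange_big /= mulr_sumr; apply: ler_sum => j _.
rewrite -mulr_suml mulrCA mulrA ler_wpM2r //.
exact: weighted_column_le.
Qed.

Definition wnorm_coord_const (P : 'M[R]_n) :=
  \sum_(i < n) \sum_(j < n) `|invmx P i j| / eps ^+ j.

Lemma wnorm_coord_const_ge0 (P : 'M[R]_n) : 0 <= wnorm_coord_const P.
Proof. by apply: sumr_ge0 => i _; apply: sumr_ge0 => j _; rewrite divr_ge0 ?exprn_ge0. Qed.

Lemma coord_le_wnorm (P : 'M[R]_n) (v : 'cV[R]_n) i : P \in unitmx -> 0 < eps ->
  `|v i 0| <= wnorm_coord_const P * wnorm (P *m v).
Proof.
move=> P_unit eps_gt0; set w := P *m v.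
have w_le j : `|w j 0| <= wnorm w / eps ^+ j.
  rewrite ler_pdivlMr ?exprn_gt0 // /wnorm (bigD1 j) //= mulrC lerDl.
  by apply: sumr_ge0 => k _; rewrite mulr_ge0 ?exprn_ge0.
have -> : v = invmx P *m w by rewrite mulKmx.
rewrite mxE; apply: le_trans (ler_norm_sum _ _ _) _.
apply: (le_trans (y := (\sum_j `|invmx P i j| / eps ^+ j) * wnorm w)).
  rewrite mulr_suml; apply: ler_sum => j _.
  by rewrite normrM -mulrA [_^-1 * _]mulrC ler_wpM2l.
rewrite ler_wpM2r ?wnorm_ge0 // /wnorm_coord_const [leRHS](bigD1 i) //= lerDl.
by apply: sumr_ge0 => k _; apply: sumr_ge0 => j _; rewrite divr_ge0 ?exprn_ge0.
Qed.

End WeightedNorm.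

Definition int_box (n m : nat) : seq 'cV[int]_n :=
  [seq \col_i ((f i : nat)%:Z - m%:Z) | f : {ffun 'I_n -> 'I_(m.*2.+1)}].

Lemma int_boxP (n m : nat) (z : 'cV[int]_n) :
  (forall i j, (absz (z i j) <= m)%N) -> z \in int_box n m.
Proof.
move=> z_le; apply/mapP; exists [ffun i => inord (absz (z i 0 + m%:Z)%R)].
  exact: mem_enum.
apply/matrixP => i j; have := z_le i j; rewrite !mxE ffunE (ord1 j) => z_le_ij.
by rewrite inordK; move: z_le_ij; move: (z i 0 : int) => x; lia.
Qed.

Lemma exists_trig_similar (C : numClosedFieldType) n (X : 'M[C]_n) :
  exists2 P : 'M[C]_n, P \in unitmx & is_trig_mx (P *m X *m invmx P).
Proof.
case: n X => [|n] X; first by exists 1%:M; rewrite ?unitmx1 //; apply/is_trig_mxP => -[].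
have [P /unitarymx_unit P_unit X_trig] := Schur X (ltn0Sn n).
by exists P => //; move: X_trig; rewrite /similar_to conjumx.
Qed.

Lemma trig_similar_diag_eigenvalue (F : fieldType) n (P X : 'M[F]_n) i :
  P \in unitmx -> is_trig_mx (P *m X *m invmx P) -> eigenvalue X ((P *m X *m invmx P) i i).
Proof.
set T := P *m X *m invmx P => P_unit T_trig.
have /eigenvalueP [v Tv v_neq0] : eigenvalue T (T i i).
  by rewrite eigenvalue_root_char char_poly_trig // (bigD1 i) //= rootM root_XsubC eqxx.
apply/eigenvalueP; exists (v *m P); first by rewrite scalemxAl -Tv /T !mulmxA mulmxKV.
by rewrite mulmx_free_eq0 ?row_free_unit.
Qed.

Lemma exists_uniform_lt1 (R : numDomainType) (I : finType) (x : I -> R) :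
  (forall i, 0 <= x i < 1) -> exists q : R, [/\ 0 <= q, q < 1 & forall i, x i <= q].
Proof.
move=> x_bnd; suff [q [q_ge0 q_lt1 le_q]] : exists q : R,
    [/\ 0 <= q, q < 1 & all (fun i => x i <= q) (enum I)].
  by exists q; split=> // i; apply: (allP le_q); rewrite mem_enum.
elim: (enum I) => [|i s [q [q_ge0 q_lt1 le_q]]]; first by exists 0; rewrite lexx ltr01.
have /andP [xi_ge0 xi_lt1] := x_bnd i.
case/orP: (real_leVge (ger0_real xi_ge0) (ger0_real q_ge0)) => [xi_le_q | q_le_xi].
  by exists q; rewrite /= xi_le_q.
exists (x i); rewrite /= lexx; split=> //.
by apply/allP => j j_s; apply: le_trans q_le_xi; apply: (allP le_q).
Qed.

Lemma exists_small_weight (R : numFieldType) (q s : R) : 0 <= q -> q < 1 -> 0 <= s ->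
  exists eps : R, [/\ 0 < eps, eps <= 1 & q + eps * s < 1].
Proof.
move=> q_ge0 q_lt1 s_ge0; have d_gt0 : 0 < 1 - q by rewrite subr_gt0.
have s1_gt0 : 0 < 1 + s by rewrite ltr_wpDr.
exists ((1 - q) / (1 + s)); split; first by rewrite divr_gt0.
  by rewrite ler_pdivrMr // mul1r lerBlDr -addrA lerDl addr_ge0.
by rewrite addrC -ltrBrDr mulrAC ltr_pdivrMr // ltr_pM2l // ltrDr ltr01.
Qed.

Section IntDilation.
Variables (n : nat) (B : 'M[int]_n).
Hypothesis B_dilation : int_dilation B.

Let BC : 'M[algC]_n := map_mx intr B.

Lemma int_dilation_det_neq0 : \det B != 0.
Proof.
apply: contraTneq isT => detB0; have /det0P [v v_neq0 vB0] : \det BC == 0.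
  by rewrite det_map_mx detB0 rmorph0.
have /B_dilation : eigenvalue BC 0 by apply/eigenvalueP; exists v; rewrite ?scale0r.
by rewrite normr0 ltr10.
Qed.

Let BC_unit : BC \in unitmx := map_mx_intr_unit algC int_dilation_det_neq0.

Lemma int_dilation_inv_eigenvalue mu : eigenvalue (invmx BC) mu -> `|mu| < 1.
Proof.
case/eigenvalueP => v v_mu v_neq0.
have v_BC : v = mu *: v *m BC by rewrite -v_mu mulmxKV.
have mu_neq0 : mu != 0 by apply: contraNneq v_neq0 => mu0; rewrite v_BC mu0 scale0r mul0mx.
have : eigenvalue BC mu^-1.
  by apply/eigenvalueP; exists v => //; rewrite {2}v_BC scalemxAl scalerA mulVf ?scale1r.
by move/B_dilation; rewrite normfV invf_gt1 ?normr_gt0.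
Qed.

Lemma exists_wnorm_contraction : exists (P : 'M[algC]_n) (eps a : algC),
  [/\ P \in unitmx, 0 < eps <= 1, 0 <= a < 1 &
      forall v, wnorm eps (P *m (invmx BC *m v)) <= a * wnorm eps (P *m v)].
Proof.
have [P P_unit T_trig] := exists_trig_similar (invmx BC); set T := _ *m _ *m _ in T_trig.
have T_diag i : 0 <= `|T i i| < 1.
  by rewrite normr_ge0 int_dilation_inv_eigenvalue ?trig_similar_diag_eigenvalue.
have [q [q_ge0 q_lt1 le_q]] := exists_uniform_lt1 T_diag.
have [eps [eps_gt0 eps_le1 a_lt1]] := exists_small_weight q_ge0 q_lt1 (entry_abs_sum_ge0 T).
exists P, eps, (q + eps * entry_abs_sum T); split; rewrite ?eps_gt0 ?a_lt1 //.
  by rewrite andbT addr_ge0 // mulr_ge0 ?entry_abs_sum_ge0 ?(ltW eps_gt0).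
move=> v; have -> : P *m (invmx BC *m v) = T *m (P *m v) by rewrite /T !mulmxA mulmxKV.
exact: wnorm_trig_mul (ltW eps_gt0) eps_le1 _ _ _ T_trig le_q.
Qed.

Section LatticeNorm.
Variables (P : 'M[algC]_n) (eps a : algC).
Hypotheses (P_unit : P \in unitmx) (eps_gt0 : 0 < eps) (eps_le1 : eps <= 1) (a_ge0 : 0 <= a).
Hypothesis contraction : forall v, wnorm eps (P *m (invmx BC *m v)) <= a * wnorm eps (P *m v).

Definition lattice_norm (z : 'cV[int]_n) := wnorm eps (P *m map_mx intr z).

Lemma lattice_norm_ge0 z : 0 <= lattice_norm z.
Proof. exact: wnorm_ge0 (ltW eps_gt0) _. Qed.

Lemma lattice_norm_round_quot z :
  lattice_norm (round_quot B z) <= a * lattice_norm z + a * entry_abs_sum (P *m BC).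
Proof.
have [c cube_c digit_c] := half_cube_digit_round int_dilation_det_neq0 algC z.
have quotE : map_mx intr (round_quot B z) =
    invmx BC *m (map_mx intr z - map_mx intr (round_digit B z)).
  by rewrite -map_mxB /round_digit opprB addrC subrK map_mxM mulKmx.
rewrite /lattice_norm quotE; apply: le_trans (contraction _) _.
rewrite -mulrDr ler_wpM2l // mulmxBr; apply: le_trans (wnormB (ltW eps_gt0) _ _) _.
by rewrite lerD2l digit_c mulmxA wnorm_mul_half_cube ?(ltW eps_gt0).
Qed.

Lemma lattice_norm_sublevel_finite t : 0 <= t ->
  exists s : seq 'cV[int]_n, forall z, lattice_norm z <= t -> z \in s.
Proof.
move=> t_ge0; set G := wnorm_coord_const eps P.
have G_ge0 : 0 <= G by exact: wnorm_coord_const_ge0 (ltW eps_gt0) _.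
exists (int_box n (Num.bound (G * t))) => z z_le; apply: int_boxP => i j.
have : `|map_mx (intr : int -> algC) z i j| < (Num.bound (G * t))%:R.
  apply: le_lt_trans (archi_boundP (mulr_ge0 G_ge0 t_ge0)).
  rewrite (ord1 j); apply: le_trans (coord_le_wnorm (ltW eps_gt0) _ _ P_unit eps_gt0) _.
  exact: ler_wpM2l.
by rewrite mxE -intr_norm -abszE -pmulrn ltr_nat => /ltnW.
Qed.

End LatticeNorm.

Lemma round_quot_finite_dynamics :
  (forall z, exists s : seq 'cV[int]_n, forall k, iter k (round_quot B) z \in s) /\
  (exists s : seq 'cV[int]_n, forall p, periodic (round_quot B) p -> p \in s).
Proof.
have [P [eps [a [P_unit /andP [eps_gt0 eps_le1] /andP [a_ge0 a_lt1] contraction]]]] :=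
  exists_wnorm_contraction.
set b := a * entry_abs_sum (P *m BC); set L := b / (1 - a).
have b_ge0 : 0 <= b by rewrite mulr_ge0 ?entry_abs_sum_ge0.
have L_ge0 : 0 <= L by rewrite divr_ge0 // subr_ge0 ltW.
have nu_ge0 := lattice_norm_ge0 P eps_gt0.
have nu_quot := lattice_norm_round_quot eps_gt0 eps_le1 a_ge0 contraction.
split=> [z|].
  have [s s_spec] := lattice_norm_sublevel_finite P_unit eps_gt0 (addr_ge0 (nu_ge0 z) L_ge0).
  by exists s => k; apply/s_spec/(affine_contraction_iter_le a_ge0 a_lt1 b_ge0 nu_ge0 nu_quot).
have [s s_spec] := lattice_norm_sublevel_finite P_unit eps_gt0 L_ge0.
by exists s => p /(affine_contraction_periodic_le a_ge0 a_lt1 nu_quot); apply: s_spec.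
Qed.

End IntDilation.

Section LatticeDigits.
Variables (K : numFieldType) (n : nat) (M A : 'M[K]_n) (B : 'M[int]_n).
Hypothesis M_unit : M \in unitmx.
Hypothesis conj_A : invmx M *m A *m M = map_mx intr B.
Hypothesis detB : \det B != 0.

Let lat (z : 'cV[int]_n) : 'cV[K]_n := M *m map_mx intr z.

Lemma lat_inj : injective lat.
Proof.
move=> u v /(can_inj (mulKmx M_unit)) /matrixP uv; apply/matrixP => i j.
by move: (uv i j); rewrite !mxE; apply: intr_inj.
Qed.

Lemma latD u v : lat (u + v) = lat u + lat v.
Proof. by rewrite /lat map_mxD mulmxDr. Qed.

Lemma mulmx_conj : A *m M = M *m map_mx intr B.
Proof. by rewrite -conj_A !mulmxA mulmxV // mul1mx. Qed.

Lemma mulmx_lat_pow N z : A ^+ N *m lat z = lat (B ^+ N *m z).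
Proof.
elim: N z => [|N IH] z; first by rewrite !expr0 !mul1mx.
rewrite exprS -mulmxE -mulmxA {}IH /lat mulmxA mulmx_conj -mulmxA -map_mxM.
by rewrite mulmxA mulmxE -exprS.
Qed.

Lemma lat_radix_sum N (e : 'I_N -> 'cV[int]_n) :
  \sum_(j < N) A ^+ j *m lat (e j) = lat (\sum_(j < N) B ^+ j *m e j).
Proof.
by rewrite /lat map_mx_sum mulmx_sumr; apply: eq_bigr => j _; rewrite mulmx_lat_pow.
Qed.

Lemma in_digitsP d : in_digits M A d <-> exists2 e, d = lat e & half_cube_digit B K e.
Proof.
split=> [[[e d_e] [_ [[c [cube_c ->]] d_Mc]]] | [e -> [c cube_c e_c]]].
  exists e; first exact: d_e.
  exists c => //; apply: (can_inj (mulKmx M_unit)).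
  by rewrite -d_e d_Mc mulmxA mulmx_conj mulmxA.
split; first by exists e.
by exists (M *m c); split; [exists c | rewrite mulmxA mulmx_conj -mulmxA -e_c].
Qed.

Lemma lat_digits N (d : 'I_N -> 'cV[K]_n) : (forall j, in_digits M A (d j)) ->
  exists e : 'I_N -> 'cV[int]_n, forall j, d j = lat (e j) /\ half_cube_digit B K (e j).
Proof.
move=> d_digits.
apply: (@fin_all_exists _ _ (fun j e => d j = lat e /\ half_cube_digit B K e)) => j.
by have [e -> e_digit] := (in_digitsP (d j)).1 (d_digits j); exists e.
Qed.

Let digits_unique := radix_expansion_unique (round_digit_quot B)
  (half_cube_digit_round detB K) (@half_cube_digit_unique _ B detB K).

Lemma expansion1P z :
  expansion1 M A (lat z) <-> exists N, iter N.+1 (round_quot B) z = 0.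
Proof.
split=> [[N [d [d_digits lat_z]]] | [N quot_N]].
  have [e de] := lat_digits d_digits; exists N; symmetry.
  apply: (digits_unique (d := e)) => [j|]; first exact: (de j).2.
  apply: lat_inj; rewrite mulmx0 addr0 -lat_radix_sum lat_z.
  by apply: eq_bigr => j _; rewrite (de j).1.
exists N, (fun j => lat (round_digit B (iter j (round_quot B) z))); split.
  by move=> j; apply/in_digitsP; eexists; [reflexivity | exact: half_cube_digit_round].
rewrite lat_radix_sum -{1}(radix_expansion (round_digit_quot B) N.+1 z).
by rewrite quot_N mulmx0 addr0.
Qed.

Lemma expansion2P (S : seq 'cV[int]_n) z :
  expansion2 M A [seq lat s | s <- S] (lat z) <-> exists N, iter N (round_quot B) z \in S.
Proof.
split=> [[N [_ [d [/mapP [s s_S ->] [d_digits lat_z]]]]] | [N quot_N]].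
  have [e de] := lat_digits d_digits; exists N.
  suff <- : s = iter N (round_quot B) z by [].
  apply: (digits_unique (d := e)) => [j|]; first exact: (de j).2.
  apply: lat_inj; rewrite latD -lat_radix_sum -mulmx_lat_pow addrC lat_z; congr (_ + _).
  by apply: eq_bigr => j _; rewrite (de j).1.
exists N, (lat (iter N (round_quot B) z)).
exists (fun j => lat (round_digit B (iter j (round_quot B) z))); split; first exact: map_f.
split; first by move=> j; apply/in_digitsP; eexists; [reflexivity | exact: half_cube_digit_round].
by rewrite lat_radix_sum mulmx_lat_pow -latD addrC (radix_expansion (round_digit_quot B)).
Qed.

End LatticeDigits.

Theorem mainTheorem9 (K : numFieldType) (n : nat) (M A : 'M[K]_n) :
  M \in unitmx -> dilation_for M A ->
  exists S : seq 'cV[K]_n,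
    (forall s, s \in S -> in_lattice M s) /\
    forall x : 'cV[K]_n, in_lattice M x ->
      (expansion1 M A x /\ ~ expansion2 M A S x) \/
      (~ expansion1 M A x /\ expansion2 M A S x).
Proof.
move=> M_unit [B [B_dilation conj_A]].
have detB := int_dilation_det_neq0 B_dilation.
have [orbit_finite periodic_finite] := round_quot_finite_dynamics B_dilation.
have [S S_spec] := orbit_dichotomy (round_quot0 B) orbit_finite periodic_finite.
exists [seq M *m map_mx intr s | s <- S]; split; first by move=> _ /mapP [s _ ->]; exists s.
move=> _ [z ->]; rewrite (expansion1P M_unit conj_A detB) (expansion2P M_unit conj_A detB).
exact: S_spec.
Qed.
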